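(* Let $x_1,\dots,x_N$ be contexts and $\xi_1,\dots,\xi_N$ noises. For each $i$, let $\mathcal Y(x_i)\subset\mathbb R^{d(x_i)}$ be finite with no element a strict convex combination of others, $Y(x_i)$ the matrix with columns $y\in\mathcal Y(x_i)$, $\gamma_i=(c(x_i,y,\xi_i))_{y\in\mathcal Y(x_i)}$ for a cost $c$, and $\Omega_{\Delta^{\mathcal Y(x_i)}}$ a proper l.s.c. convex function with domain $\Delta^{\mathcal Y(x_i)}$ whose restriction to the affine hull of $\Delta^{\mathcal Y(x_i)}$ is Legendre-type. Let $\varphi_w$, $w\in\mathcal W$, be a statistical model with $\varphi_w(x_i)\in\mathbb R^{d(x_i)}$, and $\kappa>0$. Define $S(s,q;x_i,\xi_i)=\langle\gamma_i|q\rangle+\kappa\mathcal L_{\Omega_{\Delta^{\mathcal Y(x_i)}}}(s;q)$ and $\mathcal S_N(s_\otimes,q_\otimes)=\frac1N\sum_iS(s_i,q_i;x_i,\xi_i)$. Consider the scheme started from $\bar w^{(0)}$: $$q_\otimes^{(t+1)}=\operatorname*{argmin}_{q_\otimes\in\prod_i\Delta^{\mathcal Y(x_i)}}\mathcal S_N\big((Y(x_i)^\top\varphi_{\bar w^{(t)}}(x_i))_i,q_\otimes\big),\qquad \bar w^{(t+1)}\in\operatorname*{argmin}_{w\in\mathcal W}\mathcal S_N\big((Y(x_i)^\top\varphi_w(x_i))_i,q_\otimes^{(t+1)}\big).$$ Then these updates can be recast as: for each $i$, $$q_i^{(t+1)}=\operatorname*{argmin}_{q_i\in\Delta^{\mathcal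 Y(x_i)}}S\big(Y(x_i)^\top\varphi_{\bar w^{(t)}}(x_i),q_i;x_i,\xi_i\big)=\nabla\Omega^*_{\Delta^{\mathcal Y(x_i)}}\Big(Y(x_i)^\top\varphi_{\bar w^{(t)}}(x_i)-\tfrac1\kappa\gamma_i\Big),$$ so that $\mu_i^{(t+1)}:=Y(x_i)q_i^{(t+1)}$ is the expectation of $\mathbf y$ under the distribution $\nabla\Omega^*_{\Delta^{\mathcal Y(x_i)}}\big(Y(x_i)^\top\varphi_{\bar w^{(t)}}(x_i)-\frac1\kappa\gamma_i\big)$, and $$\bar w^{(t+1)}\in\operatorname*{argmin}_{w\in\mathcal W}\frac1N\sum_{i=1}^N\mathcal L_{\Omega_{\mathcal C(x_i)}}\big(\varphi_w(x_i);Y(x_i)q_i^{(t+1)}\big),$$ where $\Omega_{\mathcal C(x)}(\mu):=\min\{\Omega_{\Delta^{\mathcal Y(x)}}(q):q\in\Delta^{\mathcal Y(x)},\ Y(x)q=\mu\}$ on $\mathcal C(x)=\operatorname{conv}(\mathcal Y(x))$.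
   Context: $\Delta^{\mathcal Y}=\{q\in\mathbb R^{\mathcal Y}:q\ge0,\sum_yq_y=1\}$. Legendre-type: strictly convex on the interior of its domain and essentially smooth (with respect to the affine hull's metric for restrictions). For a convex function $\Omega$, $\Omega^*$ denotes its Fenchel conjugate and $\mathcal L_\Omega(\theta;\mu)=\Omega(\mu)+\Omega^*(\theta)-\langle\theta|\mu\rangle$ its Fenchel–Young loss; $\Omega_{\mathcal C(x)}$ is $+\infty$ outside $\mathcal C(x)$. *)

From HB Require Import structures.
From mathcomp Require Import all_boot all_order all_algebra.
From mathcomp Require Import all_classical all_reals all_analysis.
Set Implicit Arguments. Unset Strict Implicit. Unset Printing Implicit Defensive.
Import Order.TTheory GRing.Theory Num.Theory.
Import numFieldNormedType.Exports.
Local Open Scope classical_set_scope.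
Local Open Scope ring_scope.

Section Defs.
Variable R : realType.

Definition dotv n (u v : 'cV[R]_n) : R := \sum_(j < n) u j 0 * v j 0.

(* probability simplex Delta^Y, Y indexed by 'I_n *)
Definition simplex n : set 'cV[R]_n :=
  [set q | (forall j, 0 <= q j 0) /\ \sum_(j < n) q j 0 = 1].

Definition ri_simplex n : set 'cV[R]_n :=
  [set q | (forall j, 0 < q j 0) /\ \sum_(j < n) q j 0 = 1].

Definition tangent n : set 'cV[R]_n := [set h | \sum_(j < n) h j 0 = 0].

(* The columns of Y form a finite set (distinct columns) none of whose
   elements is a (strict) convex combination of the others. *)
Definition no_convex_comb d n (Y : 'M[R]_(d, n)) : Prop :=
  injective (fun j : 'I_n => col j Y) /\
  forall j : 'I_n, ~ exists lam : 'cV[R]_n,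
      simplex lam /\ lam j 0 = 0 /\ Y *m lam = col j Y.

Local Open Scope ereal_scope.

Definition proper_fun n (F : 'cV[R]_n -> \bar R) : Prop :=
  (forall q, F q != -oo) /\ exists q, F q < +oo.

Definition convex_fun n (F : 'cV[R]_n -> \bar R) : Prop :=
  forall (u v : 'cV[R]_n) (t : R), (0 < t < 1)%R ->
    F (t *: u + (1 - t) *: v)%R <= t%:E * F u + (1 - t)%:E * F v.

Definition dom_is_simplex n (F : 'cV[R]_n -> \bar R) : Prop :=
  forall q, F q < +oo <-> simplex q.

(* g is the gradient at q of the restriction of F to the affine hull
   {sum = 1} of the simplex (so g lies in the direction space). *)
Definition rel_gradient n (F : 'cV[R]_n -> \bar R) (q g : 'cV[R]_n) : Prop :=
  tangent g /\
  forall e : R, (0 < e)%R -> exists2 delta : R, (0 < delta)%R &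
    forall h : 'cV[R]_n, tangent h -> (`|h| < delta)%R ->
      (`| fine (F (q + h)%R) - fine (F q) - dotv g h | <= e * `|h|)%R.

(* The restriction of F to the affine hull of the simplex is of Legendre
   type: strictly convex on the relative interior of its domain and
   essentially smooth (relative to the affine hull). *)
Definition legendre_on_aff_simplex n (F : 'cV[R]_n -> \bar R) : Prop :=
  (forall (u v : 'cV[R]_n) (t : R), ri_simplex u -> ri_simplex v -> u != v ->
     (0 < t < 1)%R ->
     F (t *: u + (1 - t) *: v)%R < t%:E * F u + (1 - t)%:E * F v) /\
  (exists q : 'cV[R]_n, ri_simplex q) /\
  (forall q, ri_simplex q -> exists g, rel_gradient F q g) /\
  (forall (u : nat -> 'cV[R]_n) (g : nat -> 'cV[R]_n) (p : 'cV[R]_n),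
     (forall k, ri_simplex (u k)) -> (forall k, rel_gradient F (u k) (g k)) ->
     u @ \oo --> p -> ~ ri_simplex p ->
     ((fun k => `|g k|%:E) @ \oo --> +oo)).

Definition fconj n (F : 'cV[R]_n -> \bar R) (theta : 'cV[R]_n) : \bar R :=
  ereal_sup [set (dotv theta q)%:E - F q | q in [set: 'cV[R]_n]].

Definition FYloss n (F : 'cV[R]_n -> \bar R) (theta mu : 'cV[R]_n) : \bar R :=
  F mu + fconj F theta - (dotv theta mu)%:E.

(* Omega_{C}(mu) = min { Omega(q) : q in Delta, Y q = mu }, +oo outside C *)
Definition OmegaC d n (Y : 'M[R]_(d, n)) (F : 'cV[R]_n -> \bar R)
    (mu : 'cV[R]_d) : \bar R :=
  ereal_inf [set F q | q in [set q | simplex q /\ Y *m q = mu]].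

Definition Sloss n (gamma : 'cV[R]_n) (kappa : R) (F : 'cV[R]_n -> \bar R)
    (s q : 'cV[R]_n) : \bar R :=
  (dotv gamma q)%:E + kappa%:E * FYloss F s q.

Definition is_argmin (T : Type) (D : set T) (f : T -> \bar R) (x : T) : Prop :=
  D x /\ forall y, D y -> f x <= f y.

Local Close Scope ereal_scope.

Definition is_gradient n (f : 'cV[R]_n -> R) (v g : 'cV[R]_n) : Prop :=
  differentiable f v /\ forall h, 'd f v h = dotv g h.

End Defs.

From HB Require Import structures.
From mathcomp Require Import all_boot all_order all_algebra.
From mathcomp Require Import all_classical all_reals all_analysis.
From mathcomp Require Import ring lra.
Import Order.TTheory GRing.Theory Num.Theory.
Import numFieldNormedType.Exports.
Local Open Scope classical_set_scope.
Local Open Scope ring_scope.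

Set Implicit Arguments. Unset Strict Implicit. Unset Printing Implicit Defensive.

(* Since Omega is lower semicontinuous with the compact simplex as domain,
   q |-> <v|q> - Omega(q) attains its maximum, so Omega^* is finite.  A
   maximiser p lies in the relative interior: otherwise, along a segment from
   an interior point to p, the subgradient inequalities towards the vertices
   and towards the maximiser p keep the gradients of Omega bounded, against
   essential smoothness.  Strict convexity makes p unique, compactness makes it
   depend continuously on v, and squeezing Omega^* between its affine minorants
   at p shows grad Omega^*(v) = p.  Since
   S(s, q) = kappa (Omega^*(s) - <s - gamma/kappa | q> + Omega(q)), the q-update
   is this maximisation at v = s - gamma/kappa, and the averaged problem
   separates over i.  Finally Omega_C^*(phi) = Omega^*(Y^T phi), so S(Y^T phi, q)
   is kappa L_{Omega_C}(phi; Y q) plus a term independent of phi. *)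

Section InnerProduct.
Variables (R : realType) (n : nat).
Implicit Types (a : R) (u v w g h q : 'cV[R]_n).

Lemma dotvC u v : dotv u v = dotv v u.
Proof. by apply: eq_bigr => j _; rewrite mulrC. Qed.

Lemma dotvDr u v w : dotv u (v + w) = dotv u v + dotv u w.
Proof. by rewrite /dotv -big_split; apply: eq_bigr => j _; rewrite mxE mulrDr. Qed.

Lemma dotvZr a u v : dotv u (a *: v) = a * dotv u v.
Proof. by rewrite /dotv mulr_sumr; apply: eq_bigr => j _; rewrite mxE mulrCA. Qed.

Lemma dotvNr u v : dotv u (- v) = - dotv u v.
Proof. by rewrite -scaleN1r dotvZr mulN1r. Qed.

Lemma dotvBr u v w : dotv u (v - w) = dotv u v - dotv u w.
Proof. by rewrite dotvDr dotvNr. Qed.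

Lemma dotvDl u v w : dotv (v + w) u = dotv v u + dotv w u.
Proof. by rewrite dotvC dotvDr !(dotvC u). Qed.

Lemma dotvZl a u v : dotv (a *: u) v = a * dotv u v.
Proof. by rewrite dotvC dotvZr dotvC. Qed.

Lemma dotvBl u v w : dotv (v - w) u = dotv v u - dotv w u.
Proof. by rewrite !(dotvC _ u) dotvBr. Qed.

Lemma dotv0l u : dotv 0 u = 0.
Proof. by rewrite /dotv big1 // => j _; rewrite mxE mul0r. Qed.

Lemma dotv_delta g j : dotv g (delta_mx j 0) = g j 0.
Proof.
rewrite /dotv (bigD1 j) //= big1 ?mxE ?eqxx ?addr0 ?mulr1 // => k kj.
by rewrite mxE (negbTE kj) mulr0.
Qed.

Lemma dotv_trmx d (Y : 'M[R]_(d, n)) (p : 'cV[R]_d) q :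
  dotv (Y^T *m p) q = dotv p (Y *m q).
Proof.
rewrite /dotv; under eq_bigr do rewrite mxE big_distrl /=.
rewrite exchange_big; apply: eq_bigr => i _ /=.
rewrite mxE big_distrr; apply: eq_bigr => j _ /=.
by rewrite !mxE mulrCA mulrA.
Qed.

Lemma mulmx_col_sum d (Y : 'M[R]_(d, n)) q :
  Y *m q = \sum_(j < n) q j 0 *: col j Y.
Proof.
apply/matrixP => i k; rewrite !mxE summxE; apply: eq_bigr => j _.
by rewrite !mxE (ord1 k) mulrC.
Qed.

Lemma cV_norm_coord h j : `|h j 0| <= `|h|.
Proof.
by rewrite [`|h|]mx_normrE; apply/bigmax_geP; right; exists (j, 0).
Qed.

Lemma cV_norm_le h c : 0 <= c -> (forall j, `|h j 0| <= c) -> `|h| <= c.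
Proof.
move=> c0 hc; rewrite [`|h|]mx_normrE.
by apply/bigmax_leP; split => // -[j k] _ /=; rewrite (ord1 k).
Qed.

Lemma dotv_norm_le g h : `|dotv g h| <= (\sum_j `|g j 0|) * `|h|.
Proof.
rewrite /dotv mulr_suml; apply: le_trans (ler_norm_sum _ _ _) _.
apply: ler_sum => j _; rewrite normrM; apply: ler_wpM2l => //.
exact: cV_norm_coord.
Qed.

Lemma sum_norm_coord_le h : \sum_j `|h j 0| <= n%:R * `|h|.
Proof.
apply: le_trans (ler_sum _ (fun j _ => cV_norm_coord h j)) _.
by rewrite sumr_const card_ord mulr_natl.
Qed.

End InnerProduct.

Section Simplex.
Variables (R : realType) (n : nat).
Implicit Types (b g h q u v : 'cV[R]_n).

Lemma simplex_coord_le1 q j : simplex q -> q j 0 <= 1.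
Proof.
move=> [q0 <-]; rewrite (bigD1 j) //= lerDl.
by apply: sumr_ge0 => k _; apply: q0.
Qed.

Lemma simplex_norm_le1 q : simplex q -> `|q| <= 1.
Proof.
move=> sq; apply: cV_norm_le => // j.
by rewrite ger0_norm; [exact: simplex_coord_le1|case: sq].
Qed.

Lemma ri_simplexW q : ri_simplex q -> simplex q.
Proof. by move=> [q0 q1]; split => // j; apply: ltW. Qed.

Lemma simplex_convex u v t : simplex u -> simplex v -> 0 <= t <= 1 ->
  simplex (t *: u + (1 - t) *: v).
Proof.
move=> [u0 u1] [v0 v1] /andP[t0 t1]; split.
  by move=> j; rewrite !mxE addr_ge0 // mulr_ge0 // subr_ge0.
under eq_bigr do rewrite !mxE.
by rewrite big_split /= -!mulr_sumr u1 v1 !mulr1 addrC subrK.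
Qed.

Lemma ri_simplex_convex q u t : ri_simplex q -> simplex u -> 0 < t <= 1 ->
  ri_simplex (t *: q + (1 - t) *: u).
Proof.
move=> rq su /andP[t0 t1]; have t01 : 0 <= t <= 1 by rewrite ltW.
split=> [j|]; last by case: (simplex_convex (ri_simplexW rq) su t01).
 rewrite !mxE ltr_pwDl ?mulr_gt0 ?mulr_ge0 ?subr_ge0 //.
- by case: rq.
- by case: su.
Qed.

Lemma delta_simplex j : simplex (delta_mx j 0 : 'cV[R]_n).
Proof.
split=> [k|]; first by rewrite mxE; case: eqP => //= _; case: eqP.
rewrite (bigD1 j) //= big1 ?mxE ?eqxx ?addr0 // => k kj.
by rewrite mxE (negbTE kj).
Qed.

Lemma dotv_simplex_norm_le h q : simplex q -> `|dotv h q| <= `|h|.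
Proof.
move=> [q0 q1]; apply: le_trans (ler_norm_sum _ _ _) _.
rewrite -[leRHS]mulr1 -q1 mulr_sumr; apply: ler_sum => j _.
by rewrite normrM (ger0_norm (q0 j)) ler_wpM2r ?cV_norm_coord.
Qed.

Lemma dotv_simplex_shift g q s : simplex q -> dotv (g - const_mx s) q = dotv g q - s.
Proof.
move=> [_ q1]; rewrite dotvBl; congr (_ - _).
by rewrite /dotv; under eq_bigr do rewrite mxE; rewrite -mulr_sumr q1 mulr1.
Qed.

Lemma tangentB_simplex u v : simplex u -> simplex v -> tangent (u - v).
Proof.
move=> [_ u1] [_ v1]; rewrite /tangent /=.
by under eq_bigr do rewrite !mxE; rewrite sumrB u1 v1 subrr.
Qed.

Lemma tangentZ a h : tangent h -> tangent (a *: h).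
Proof.
rewrite /tangent /= => h0; under eq_bigr do rewrite !mxE.
by rewrite -mulr_sumr h0 mulr0.
Qed.

Lemma ri_simplex_coord_bound q b (C K : R) j :
  ri_simplex q -> 0 <= C -> (forall k, b k 0 <= C) -> - K <= dotv b q ->
  `|b j 0| <= C + (K + C) / q j 0.
Proof.
move=> [q_gt0 q1] C0 bC bK.
have bqC k : b k 0 * q k 0 <= C * q k 0 := ler_wpM2r (ltW (q_gt0 k)) (bC k).
have sumC : \sum_k C * q k 0 = C by rewrite -mulr_sumr q1 mulr1.
have KC : 0 <= K + C.
  suff : dotv b q <= C by lra.
  by rewrite -[leRHS]sumC; apply: ler_sum => k _.
rewrite ler_norml; apply/andP; split; last first.
  by apply: le_trans (bC j) _; rewrite lerDl divr_ge0 // ltW.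
have others : \sum_(k | k != j) b k 0 * q k 0 <= C.
  apply: le_trans (_ : \sum_(k | k != j) C * q k 0 <= C); first exact: ler_sum.
  rewrite -[leRHS]sumC [leRHS](bigD1 j) //= lerDr mulr_ge0 // ltW //.
move: bK; rewrite /dotv (bigD1 j) //= => bK.
have : - (K + C) / q j 0 <= b j 0 by rewrite ler_pdivrMr //; lra.
by apply: le_trans; rewrite mulNr lerN2 lerDr.
Qed.

Lemma tangent_norm_bound q g s (C K : R) :
  ri_simplex q -> tangent g -> 0 <= C ->
  (forall j, g j 0 - s <= C) -> - K <= dotv g q - s ->
  `|g| <= 2 * \sum_k (C + (K + C) / q k 0).
Proof.
move=> rq tg C0 gC gK; set D := \sum_k _.
pose b := g - const_mx s.
have bE j : b j 0 = g j 0 - s by rewrite !mxE.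
have bD j : `|b j 0| <= C + (K + C) / q j 0.
  apply: ri_simplex_coord_bound => // [k|]; first by rewrite bE.
  by rewrite dotv_simplex_shift //; exact: ri_simplexW.
have bD' j : `|b j 0| <= D.
  rewrite /D (bigD1 j) //=; apply: le_trans (bD j) _; rewrite lerDl.
  by apply: sumr_ge0 => k _; exact: le_trans (normr_ge0 _) (bD k).
have sD : (0 < n)%N -> `|s| <= D.
  move=> n_gt0; have sumb : \sum_j b j 0 = - (s *+ n).
    by under eq_bigr do rewrite bE; rewrite sumrB tg sumr_const card_ord sub0r.
  have : `|s| *+ n <= D *+ n.
    rewrite -normrMn -normrN -sumb; apply: le_trans (ler_norm_sum _ _ _) _.
    by rewrite -[n in D *+ n]card_ord -sumr_const; apply: ler_sum.
  by rewrite lerMn2r gtn_eqF.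
apply: cV_norm_le => [|j]; first by apply: mulr_ge0 => //; apply: sumr_ge0 => k _;
  exact: le_trans (normr_ge0 _) (bD k).
have := sD (leq_ltn_trans (leq0n j) (ltn_ord j)).
have : `|g j 0| <= `|b j 0| + `|s| by rewrite bE -{1}(subrK s (g j 0)) ler_normD.
by have := bD' j; lra.
Qed.

End Simplex.

Section Topology.
Variable R : realType.

Lemma norm_trmx m p (A : 'M[R]_(m, p)) : `|A^T| = `|A|.
Proof.
suff le m' p' (A' : 'M[R]_(m', p')) : `|A'^T| <= `|A'|.
  by apply/eqP; rewrite eq_le le /= -{1}(trmxK A) le.
rewrite [X in X <= _]mx_normrE [X in _ <= X]mx_normrE; apply/bigmax_leP; split.
  by apply/bigmax_geP; left.
by move=> [i j] _ /=; rewrite mxE; apply/bigmax_geP; right; exists (j, i).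
Qed.

Lemma trmx_continuous m p : continuous (@trmx R m p).
Proof.
move=> A; apply/(@cvgrPdist_lt _ _ _ _ (nbhs_filter A)) => e e0.
apply/(@nbhs_normP _ ('M[R]_(m, p) : normedModType R)); exists e => //= B.
by rewrite -linearB /= norm_trmx.
Qed.

(* [bounded_closed_compact] is only available for row vectors *)
Lemma bounded_closed_cV_compact n (A : set 'cV[R]_n) (M : R) :
  closed A -> (forall q, A q -> `|q| <= M) -> compact A.
Proof.
move=> cA bA; pose B := (@trmx R 1 n) @^-1` A.
have -> : A = (@trmx R 1 n) @` B.
  by apply/seteqP; split => [q Aq|_ [r Br <-] //]; exists q^T; rewrite /B /= trmxK.
apply: continuous_compact.
  by apply: continuous_subspaceT; apply: trmx_continuous.
apply: bounded_closed_compact; last first.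
  by apply: preimage_closed => // x _; exact: trmx_continuous.
exists M; split; first by rewrite num_real.
move=> M' MM' r Br; apply: le_trans (ltW MM').
by rewrite -norm_trmx; apply: bA.
Qed.

Variable n : nat.
Implicit Types (p q v : 'cV[R]_n).

Lemma dotv_continuous v : continuous (fun q : 'cV[R]_n => dotv v q).
Proof.
move=> q; apply/(@cvgrPdist_lt _ _ _ _ (nbhs_filter q)) => e e0.
pose C := \sum_j `|v j 0| + 1.
have C0 : 0 < C by rewrite ltr_pwDr // sumr_ge0.
apply/(@nbhs_normP _ ('cV[R]_n : normedModType R)); exists (e / C) => /=.
  by rewrite divr_gt0.
move=> y /=; rewrite -dotvBr ltr_pdivlMr // => hy.
apply: le_lt_trans (dotv_norm_le _ _) _; apply: le_lt_trans hy.
by rewrite mulrC ler_wpM2l // lerDl.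
Qed.

Lemma simplex_closed : closed (@simplex R n).
Proof.
have sumE q : dotv (const_mx 1) q = \sum_j q j 0.
  by apply: eq_bigr => j _; rewrite mxE mul1r.
have -> : @simplex R n =
    (\bigcap_(j : 'I_n) [set q : 'cV[R]_n | 0 <= q j 0]) `&`
    dotv (const_mx 1) @^-1` [set 1].
  apply/seteqP; split => q [q0 q1]; split => //=; rewrite ?sumE //.
  - by move=> j _; apply: q0.
  - by move=> j; apply: (q0 j).
  - by rewrite -sumE.
apply: closedI.
  apply: closed_bigI => j _; apply: (@preimage_closed _ _ _ [set x : R | 0 <= x]).
    by move=> q _; apply: coord_continuous.
  exact: closed_ge.
apply: preimage_closed => [q _|]; first exact: dotv_continuous.
exact: closed_eq.
Qed.

Lemma simplex_compact : compact (@simplex R n).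
Proof.
apply: (bounded_closed_cV_compact (M := 1)); first exact: simplex_closed.
exact: simplex_norm_le1.
Qed.

Lemma is_gradient_of_bound (f : 'cV[R]_n -> R) v g :
  (forall e, 0 < e -> exists2 d, 0 < d & forall h, `|h| < d ->
     `|f (v + h) - f v - dotv g h| <= e * `|h|) -> is_gradient f v g.
Proof.
move=> hb.
have glin : linear (dotv g : 'cV[R]_n -> R).
  by move=> a x y; rewrite dotvDr dotvZr.
pose gL : {linear 'cV[R]_n -> R} :=
  HB.pack (dotv g : 'cV[R]_n -> R) (GRing.isLinear.Build _ _ _ _ _ glin).
have gc : continuous gL by exact: dotv_continuous.
have hlo : f \o shift v = cst (f v) + gL +o_ (0 : 'cV[R]_n) id.
  apply/eqaddoP => e e0; have [d d0 hd] := hb e e0.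
  apply/(@nbhs_normP _ ('cV[R]_n : normedModType R)); exists d => //= h /=.
  rewrite sub0r normrN => hh.
  by rewrite !fctE /= opprD addrA (addrC h); exact: hd.
have dE : 'd f v = gL :> ('cV[R]_n -> R) := diff_unique gc hlo.
split; last by move=> h; rewrite dE.
by apply/diff_locallyP; rewrite dE.
Qed.

End Topology.

Section UpperSemicontinuousMax.
Variables (R : realType) (T : topologicalType) (f : T -> \bar R).
Local Open Scope ereal_scope.
Hypothesis f_usc : forall x (a : R), f x < a%:E -> \forall y \near x, f y < a%:E.
Variable K : set T.
Hypothesis K_compact : compact K.

Lemma usc_lt_near_compact (G : set_system R) {PG : Filter G} :
  (forall x, K x -> exists2 a : R, f x < a%:E & \forall B \near G, (a < B)%R) ->
  \forall B \near G, forall y, K y -> f y < B%:E.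
Proof.
move=> hK; have /compact_near_coveringP/(_ R G (fun B y => f y < B%:E) PG) := K_compact.
apply=> x Kx; have [a fa aG] := hK x Kx.
exists ([set y | f y < a%:E], [set B | (a < B)%R]) => /=.
  by split => //; exact: f_usc.
by move=> [y B] /= [fy aB]; apply: lt_trans fy _; rewrite lte_fin.
Qed.

Hypothesis f_fin : forall x, K x -> f x \is a fin_num.

Lemma usc_bounded_compact : exists B : R, forall y, K y -> f y < B%:E.
Proof.
have : \forall B \near +oo%R, forall y, K y -> f y < B%:E.
  apply: usc_lt_near_compact => x Kx; exists (fine (f x) + 1)%R.
    by rewrite -{1}(fineK (f_fin Kx)) lte_fin ltrDl.
  by apply: nbhs_pinfty_gt; rewrite num_real.
by move=> /filter_ex[B HB]; exists B.
Qed.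

Lemma usc_gap_compact (m : R) : (forall x, K x -> f x < m%:E) ->
  exists2 B : R, (B < m)%R & forall y, K y -> f y < B%:E.
Proof.
move=> fm.
have : \forall B \near m^'-, forall y, K y -> f y < B%:E.
  apply: usc_lt_near_compact => x Kx.
  have := fm x Kx; rewrite -(fineK (f_fin Kx)) lte_fin => fxm.
  exists ((fine (f x) + m) / 2)%R; first by rewrite lte_fin; lra.
  by apply: nbhs_left_gt; lra.
move=> fG; have /filter_ex[B [Bm HB]] :
    \forall B \near m^'-, (B < m)%R /\ forall y, K y -> f y < B%:E.
  by apply: filterS2 (nbhs_left_lt m) fG.
by exists B.
Qed.

Lemma usc_attains_max_compact : K !=set0 ->
  exists2 p, K p & forall q, K q -> f q <= f p.
Proof.
move=> [x0 Kx0]; have [B fB] := usc_bounded_compact.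
pose M := ereal_sup (f @` K).
have fM q : K q -> f q <= M by move=> Kq; apply: ereal_sup_ubound; exists q.
have MB : M <= B%:E by apply: ge_ereal_sup => _ [q Kq <-]; exact/ltW/fB.
have Mfin : M \is a fin_num.
  rewrite fin_numE; apply/andP; split.
    apply: contraTN (fM _ Kx0) => /eqP ->; rewrite leeNy_eq.
    by move: (f_fin Kx0); case: (f x0).
  by apply: contraTN MB => /eqP ->; rewrite leye_eq.
have [[p Kp Mp]|nomax] := pselect (exists2 p, K p & M <= f p).
  by exists p => // q /fM/le_trans; apply.
have fltM q : K q -> f q < (fine M)%:E.
  move=> Kq; rewrite fineK // lt_neqAle fM // andbT.
  by apply/negP => /eqP fqM; apply: nomax; exists q; rewrite ?fqM.
have [B' B'M fB'] := usc_gap_compact fltM.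
have : M <= B'%:E by apply: ge_ereal_sup => _ [q Kq <-]; exact/ltW/fB'.
by rewrite -(fineK Mfin) lee_fin leNgt B'M.
Qed.

End UpperSemicontinuousMax.

Definition simplex_legendre (R : realType) n (F : 'cV[R]_n -> \bar R) : Prop :=
  proper_fun F /\ lower_semicontinuous F /\ convex_fun F /\
  dom_is_simplex F /\ legendre_on_aff_simplex F.

Section Conjugate.
Variables (R : realType) (n : nat) (F : 'cV[R]_n -> \bar R).
Implicit Types (g h p q u v z : 'cV[R]_n).

Definition conj_obj v q : \bar R := ((dotv v q)%:E - F q)%E.

Hypothesis FL : simplex_legendre F.

Let F_proper : proper_fun F. Proof. by case: FL. Qed.
Let F_lsc : lower_semicontinuous F. Proof. by case: FL => _ []. Qed.
Let F_convex : convex_fun F. Proof. by case: FL => _ [_ []]. Qed.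
Let F_dom : dom_is_simplex F. Proof. by case: FL => _ [_ [_ []]]. Qed.
Let F_legendre : legendre_on_aff_simplex F. Proof. by case: FL => _ [_ [_ []]]. Qed.

Local Open Scope ereal_scope.

Lemma F_fin_num q : simplex q -> F q \is a fin_num.
Proof. by move=> /F_dom sq; rewrite fin_numE (proj1 F_proper q) lt_eqF. Qed.

Lemma F_out q : ~ simplex q -> F q = +oo.
Proof. by move=> nsq; apply/eqP; rewrite eq_le leey leNgt; apply/negP => /F_dom. Qed.

Lemma conj_obj_out v q : ~ simplex q -> conj_obj v q = -oo.
Proof. by move=> /F_out; rewrite /conj_obj => ->. Qed.

Lemma conj_objE v q : simplex q -> conj_obj v q = (dotv v q - fine (F q))%:E.
Proof. by move=> /F_fin_num; rewrite /conj_obj; case: (F q). Qed.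

Lemma conj_obj_usc v x (a : R) :
  conj_obj v x < a%:E -> \forall y \near x, conj_obj v y < a%:E.
Proof.
move=> ha; have [b bFx vxb] : exists2 b : R, b%:E < F x & (dotv v x - b < a)%R.
  move: ha (proj1 F_proper x); rewrite /conj_obj; case: (F x) => [r|_ _|//] /=.
    by rewrite -EFinB lte_fin => ha' _; exists ((r + dotv v x - a) / 2)%R;
      rewrite ?lte_fin; lra.
  by exists (dotv v x - a + 1)%R; rewrite ?ltry //; lra.
have vnear : \forall y \near x, (dotv v y < a + b)%R.
  by apply: (cvgr_lt _ (@dotv_continuous R n v x)); lra.
have Fnear : \forall y \near x, b%:E < F y.
  by have [V nV VF] := F_lsc bFx; apply: filterS nV.
move: Fnear vnear; apply: filterS2 => y; rewrite /conj_obj.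
case: (F y) => [r||] //= bFy vy; last by rewrite addeNy ltNye.
by rewrite -EFinB lte_fin; rewrite lte_fin in bFy; lra.
Qed.

Lemma ri_simplex_exists : exists q, ri_simplex q.
Proof. by case: F_legendre => _ []. Qed.

Lemma conj_obj_argmax v :
  exists2 p, simplex p & forall q, conj_obj v q <= conj_obj v p.
Proof.
have [q0 /ri_simplexW sq0] := ri_simplex_exists.
have [|p sp pmax] := usc_attains_max_compact (@conj_obj_usc v)
  (@simplex_compact R n) _ (ex_intro _ q0 sq0).
  by move=> q sq; rewrite conj_objE.
exists p => // q; have [sq|nsq] := pselect (simplex q); first exact: pmax.
by rewrite conj_obj_out // leNye.
Qed.

Lemma fconj_argmax v p :
  (forall q, conj_obj v q <= conj_obj v p) -> fconj F v = conj_obj v p.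
Proof.
move=> pmax; apply/eqP; rewrite eq_le; apply/andP; split.
  by apply: ge_ereal_sup => _ [q _ <-]; exact: pmax.
by apply: ereal_sup_ubound; exists p.
Qed.

Lemma fconj_fin_num v : fconj F v \is a fin_num.
Proof. by have [p sp /fconj_argmax ->] := conj_obj_argmax v; rewrite conj_objE. Qed.


Local Close Scope ereal_scope.

Lemma F_fine_convex u z t : simplex u -> simplex z -> 0 < t < 1 ->
  fine (F (t *: u + (1 - t) *: z)) <= t * fine (F u) + (1 - t) * fine (F z).
Proof.
move=> su sz t01; have /F_fin_num : simplex (t *: u + (1 - t) *: z).
  by apply: simplex_convex => //; case/andP: t01 => t0 t1; rewrite !ltW.
move: (F_convex u z t01) (F_fin_num su) (F_fin_num sz).
by case: (F u) => [a||] //; case: (F z) => [b||] //; case: (F _) => [c||].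
Qed.

Lemma F_fine_strict_convex u z t : ri_simplex u -> ri_simplex z -> u != z ->
  0 < t < 1 ->
  fine (F (t *: u + (1 - t) *: z)) < t * fine (F u) + (1 - t) * fine (F z).
Proof.
move=> ru rz uz t01; have /F_fin_num : simplex (t *: u + (1 - t) *: z).
  apply: simplex_convex; try exact: ri_simplexW.
  by case/andP: t01 => t0 t1; rewrite !ltW.
move: (proj1 F_legendre u z t ru rz uz t01).
move: (F_fin_num (ri_simplexW ru)) (F_fin_num (ri_simplexW rz)).
by case: (F u) => [a||] //; case: (F z) => [b||] //; case: (F _) => [c||].
Qed.

Lemma rel_gradient_subgrad u g z : ri_simplex u -> rel_gradient F u g ->
  simplex z -> dotv g (z - u) <= fine (F z) - fine (F u).
Proof.
move=> ru [_ hg] sz; have su := ri_simplexW ru.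
set c := `|z - u|; have c0 : 0 <= c := normr_ge0 _.
suff key e : 0 < e -> dotv g (z - u) <= fine (F z) - fine (F u) + e * c.
  apply/ler_addgt0Pr => e e0; have c1 : 0 < c + 1 by rewrite ltr_pwDr.
  apply: le_trans (key _ (divr_gt0 e0 c1)) _; rewrite lerD2l mulrAC.
  by rewrite ler_pdivrMr // ler_pM2l // lerDl.
move=> e0; have [d d0 hd] := hg e e0.
(* a step [s] towards [z] short enough for the bound [hd] *)
pose s := Num.min (1 / 2) (d / (c + 1)).
have s0 : 0 < s by rewrite lt_min; apply/andP; split; [lra|apply: divr_gt0 => //; lra].
have s1 : s < 1 by rewrite gt_min; apply/orP; left; lra.
have sc : s * c < d.
  have : s <= d / (c + 1) by rewrite ge_min lexx orbT.
  by rewrite ler_pdivlMr ?ltr_pwDr //; nra.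
have := hd _ (tangentZ s (tangentB_simplex sz su)).
rewrite normrZ gtr0_norm // => /(_ sc).
have -> : u + s *: (z - u) = s *: z + (1 - s) *: u.
  by apply/matrixP => i j; rewrite !mxE; ring.
rewrite dotvZr ler_norml -/c => /andP[lower _].
have s01 : 0 < s < 1 by rewrite s0 s1.
have conv := F_fine_convex sz su s01.
suff : s * dotv g (z - u) <= s * (fine (F z) - fine (F u) + e * c) by rewrite ler_pM2l.
lra.
Qed.

Lemma F_bounded_below : exists fm : R, forall q, simplex q -> fm <= fine (F q).
Proof.
have [p sp pmax] := conj_obj_argmax 0.
exists (fine (F p)) => q sq; have := pmax q.
by rewrite !conj_objE // !dotv0l lee_fin; lra.
Qed.

Lemma subgrad_vertex_bound : exists2 C : R, 0 <= C &
  forall u g j, ri_simplex u -> rel_gradient F u g -> g j 0 - dotv g u <= C.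
Proof.
have [fm Ffm] := F_bounded_below.
pose Fe j := fine (F (delta_mx j 0)).
exists (\sum_j `|Fe j| + `|fm|) => [|u g j ru gu]; first by rewrite addr_ge0 ?sumr_ge0.
have := rel_gradient_subgrad ru gu (delta_simplex R j).
rewrite dotvBr dotv_delta -/(Fe j).
have := Ffm _ (ri_simplexW ru).
have : Fe j <= \sum_j `|Fe j|.
  by rewrite (bigD1 j) //=; apply: le_trans (ler_norm _) _; rewrite lerDl sumr_ge0.
have := ler_norm (- fm); rewrite normrN; lra.
Qed.

Lemma argmax_grad_dir v p q t g :
  simplex p -> (forall z, conj_obj v z <= conj_obj v p)%E -> simplex q ->
  0 < t <= 1 -> ri_simplex (t *: q + (1 - t) *: p) ->
  rel_gradient F (t *: q + (1 - t) *: p) g ->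
  dotv v (q - p) <= dotv g (q - p).
Proof.
set u := _ + _ => sp pmax sq /andP[t0 _] ru gu.
have pu : p - u = - t *: (q - p) by apply/matrixP => i j; rewrite !mxE; ring.
have := rel_gradient_subgrad ru gu sp; rewrite pu dotvZr.
have := pmax u; rewrite !conj_objE ?lee_fin //; last exact: ri_simplexW.
have : dotv v p - dotv v u = - t * dotv v (q - p) by rewrite -dotvBr pu dotvZr.
move=> vpu hmax hsub.
suff : t * dotv v (q - p) <= t * dotv g (q - p) by rewrite ler_pM2l.
lra.
Qed.

Lemma argmax_ri v p :
  simplex p -> (forall q, conj_obj v q <= conj_obj v p)%E -> ri_simplex p.
Proof.
(* Were [p] on the relative boundary, the gradients [g k] at the points [u k]
   tending to [p] would blow up, but [tangent_norm_bound] keeps them bounded. *)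
move=> sp pmax; apply: contrapT => nrp.
have [q0 rq0] := ri_simplex_exists; have sq0 := ri_simplexW rq0.
have [_ [_ [F_diff F_steep]]] := F_legendre.
pose t k : R := harmonic k.
have t01 k : 0 < t k <= 1.
  by rewrite harmonic_gt0 /t /harmonic /= invf_le1 ?ler1n ?ltr0n.
pose u k := t k *: q0 + (1 - t k) *: p.
have ru k : ri_simplex (u k) := ri_simplex_convex rq0 sp (t01 k).
have [g gu] := choice (fun k => F_diff (u k) (ru k)).
have u_cvg : u @ \oo --> p.
  have -> : u = fun k => p + t k *: (q0 - p).
    by apply/funext => k; apply/matrixP => i j; rewrite !mxE; ring.
  have : (fun k => p + t k *: (q0 - p)) @ \oo --> p + 0 *: (q0 - p).
    by apply: cvgD; [exact: cvg_cst|exact: cvgZr_tmp cvg_harmonic].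
  by rewrite scale0r addr0.
have [C C0 gC] := subgrad_vertex_bound.
pose c := dotv v (q0 - p).
have g_bounded k : `|g k| <= 2 * \sum_j (C + (`|c| + C) / q0 j 0).
  apply: (tangent_norm_bound (s := dotv (g k) (u k)) rq0 (proj1 (gu k)) C0).
    by move=> j; apply: gC.
  have -> : dotv (g k) q0 - dotv (g k) (u k) = (1 - t k) * dotv (g k) (q0 - p).
    by rewrite -dotvBr -dotvZr; congr dotv; apply/matrixP => i j; rewrite !mxE; ring.
  have := argmax_grad_dir sp pmax sq0 (t01 k) (ru k) (gu k); rewrite -/c.
  have := t01 k; have := ler_norm c; have := ler_norm (- c); rewrite normrN.
  nra.
have /cvgeyPgt/(_ (2 * \sum_j (C + (`|c| + C) / q0 j 0))) :=
  F_steep u g p ru gu u_cvg nrp.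
by case/filter_ex => k; rewrite lte_fin ltNge g_bounded.
Qed.


Lemma argmax_unique v p1 p2 : simplex p1 -> simplex p2 ->
  (forall q, conj_obj v q <= conj_obj v p1)%E ->
  (forall q, conj_obj v q <= conj_obj v p2)%E -> p1 = p2.
Proof.
move=> s1 s2 max1 max2; apply: contrapT => /eqP p12.
have half : 0 < (2^-1 : R) < 1 by apply/andP; split; lra.
have := F_fine_strict_convex (argmax_ri s1 max1) (argmax_ri s2 max2) p12 half.
have sm : simplex (2^-1 *: p1 + (1 - 2^-1) *: p2).
  by apply: simplex_convex => //; apply/andP; split; lra.
have := max1 (2^-1 *: p1 + (1 - 2^-1) *: p2); have := max1 p2; have := max2 p1.
by rewrite !conj_objE // !lee_fin dotvDr !dotvZr; lra.
Qed.

Lemma argmax_continuous v p (eps : R) : simplex p ->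
  (forall q, conj_obj v q <= conj_obj v p)%E -> 0 < eps ->
  exists2 d, 0 < d & forall h q, `|h| < d -> simplex q ->
    (forall z, conj_obj (v + h) z <= conj_obj (v + h) q)%E -> `|q - p| < eps.
Proof.
move=> sp pmax eps0.
pose K := [set q | simplex q /\ eps <= `|q - p|].
have dist_cont : continuous (fun q : 'cV[R]_n => `|q - p|).
  move=> x; apply/(@cvgrPdist_lt _ _ _ _ (nbhs_filter x)) => e e0.
  apply/(@nbhs_normP _ ('cV[R]_n : normedModType R)); exists e => //= y /= xy.
  apply: le_lt_trans xy; apply: le_trans (ler_dist_dist (x - p) (y - p)) _.
  by rewrite opprB addrA subrK.
have K_compact : compact K.
  apply: (bounded_closed_cV_compact (M := 1)); last by move=> q [/simplex_norm_le1].
  apply: closedI; first exact: simplex_closed.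
  apply: (@preimage_closed _ _ _ [set x : R | eps <= x]) => [x _|].
    exact: dist_cont.
  exact: closed_ge.
(* away from [p], the objective stays below its maximum by a uniform gap *)
have Klt x : K x -> (conj_obj v x < (fine (conj_obj v p))%:E)%E.
  move=> [sx epsx]; rewrite fineK ?lt_neqAle ?pmax ?andbT; last by rewrite conj_objE.
  apply/negP => /eqP xp; move: epsx.
  have xmax q : (conj_obj v q <= conj_obj v x)%E by rewrite xp.
  rewrite (argmax_unique sx sp xmax pmax).
  by rewrite subrr normr0 leNgt eps0.
have [B Bm KB] := usc_gap_compact (@conj_obj_usc v) K_compact
  (fun x Kx => ltac:(by rewrite conj_objE //; case: Kx)) Klt.
exists ((fine (conj_obj v p) - B) / 2); first by apply: divr_gt0 => //; lra.
move=> h q hd sq qmax; rewrite ltNge; apply/negP => epsq.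
have := KB q (conj sq epsq); have := qmax p.
rewrite !conj_objE // !lee_fin !lte_fin !dotvDl => h1 h2.
move: (dotv_simplex_norm_le h sq) (dotv_simplex_norm_le h sp); rewrite !ler_norml.
move=> /andP[a1 a2] /andP[b1 b2].
by rewrite conj_objE //= in Bm hd; lra.
Qed.

Lemma fconj_gradient v p : simplex p ->
  (forall q, conj_obj v q <= conj_obj v p)%E ->
  is_gradient (fun w => fine (fconj F w)) v p.
Proof.
move=> sp pmax.
have /choice[pw pwmax] : forall w, exists q,
    simplex q /\ forall z, (conj_obj w z <= conj_obj w q)%E.
  by move=> w; have [q sq qmax] := conj_obj_argmax w; exists q.
have Fc w : fine (fconj F w) = dotv w (pw w) - fine (F (pw w)).
  by have [sw wmax] := pwmax w; rewrite (fconj_argmax wmax) conj_objE.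
have Fc_ge w q : simplex q -> dotv w q - fine (F q) <= fine (fconj F w).
  move=> sq; have [sw wmax] := pwmax w.
  by have := wmax q; rewrite Fc !conj_objE ?lee_fin.
apply: is_gradient_of_bound => e e0.
have n1 : 0 < n%:R + 1 :> R by rewrite ltr_pwDr.
have [d d0 hd] := argmax_continuous sp pmax (divr_gt0 e0 n1).
exists d => // h hh; have [sq qmax] := pwmax (v + h).
have near_p := hd h (pw (v + h)) hh sq qmax.
(* squeeze [fconj F] between its affine minorants at [p] and [pw (v + h)] *)
have up := Fc_ge v _ sq; have lo := Fc_ge (v + h) _ sp.
rewrite (Fc (v + h)) in lo *; rewrite !dotvDl in lo *.
have key : `|dotv h (pw (v + h) - p)| <= e * `|h|.
  apply: le_trans (dotv_norm_le _ _) _.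
  apply: le_trans (_ : (n%:R * `|h|) * (e / (n%:R + 1)) <= _).
    by apply: ler_pM => //; [apply: sumr_ge0|exact: sum_norm_coord_le|exact: ltW].
  rewrite mulrAC ler_wpM2r // mulrCA ler_piMr ?(ltW e0) //.
  by rewrite ler_pdivrMr // mul1r lerDl.
move: key; rewrite dotvBr ler_norml => /andP[k1 k2].
have Fv : fine (fconj F v) = dotv v p - fine (F p).
  by rewrite (fconj_argmax pmax) conj_objE.
rewrite Fv (dotvC p h) ler_norml; apply/andP; split; lra.
Qed.

End Conjugate.

Section MarginalRegularizer.
Variables (R : realType) (n d : nat) (F : 'cV[R]_n -> \bar R) (Y : 'M[R]_(d, n)).
Hypothesis FL : simplex_legendre F.
Implicit Types (phi : 'cV[R]_d) (q : 'cV[R]_n).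
Local Open Scope ereal_scope.

Lemma OmegaC_le q : simplex q -> OmegaC Y F (Y *m q) <= F q.
Proof. by move=> sq; apply: ereal_inf_lbound; exists q. Qed.

Lemma OmegaC_fin_num q : simplex q -> OmegaC Y F (Y *m q) \is a fin_num.
Proof.
move=> sq; have [fm Ffm] := F_bounded_below FL.
have Ffin := F_fin_num FL sq.
have lb : fm%:E <= OmegaC Y F (Y *m q).
  apply: le_ereal_inf_tmp => _ [q' [sq' _] <-].
  by rewrite -(fineK (F_fin_num FL sq')) lee_fin; apply: Ffm.
rewrite fin_numE; apply/andP; split.
  by apply: contraTN lb => /eqP ->; rewrite leeNy_eq.
by apply: contraTN (OmegaC_le sq) => /eqP ->; rewrite leye_eq; case: (F q) Ffin.
Qed.

Lemma fconj_OmegaC phi : fconj (OmegaC Y F) phi = fconj F (Y^T *m phi).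
Proof.
have cfin := fconj_fin_num FL (Y^T *m phi).
apply/eqP; rewrite eq_le; apply/andP; split.
  apply: ge_ereal_sup => _ [mu _ <-]; rewrite lee_subel_addl // -leeBlDr //.
  apply: le_ereal_inf_tmp => _ [q [sq <-] <-].
  rewrite leeBlDr // addeC -lee_subel_addr ?(F_fin_num FL) // -dotv_trmx.
  by apply: ereal_sup_ubound; exists q.
apply: ge_ereal_sup => _ [q _ <-].
have [sq|nsq] := pselect (simplex q).
  apply: le_trans (_ : (dotv phi (Y *m q))%:E - OmegaC Y F (Y *m q) <= _).
    by rewrite dotv_trmx leeB // OmegaC_le.
  by apply: ereal_sup_ubound; exists (Y *m q).
by rewrite -/(conj_obj _ _ _) conj_obj_out ?leNye.
Qed.

Lemma FYloss_OmegaC_fin_num phi q : simplex q ->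
  FYloss (OmegaC Y F) phi (Y *m q) \is a fin_num.
Proof.
move=> sq; rewrite /FYloss fconj_OmegaC.
by rewrite fin_numB fin_numD OmegaC_fin_num // fconj_fin_num.
Qed.

End MarginalRegularizer.

Section FenchelYoungObjective.
Variables (R : realType) (n : nat) (F : 'cV[R]_n -> \bar R).
Hypothesis FL : simplex_legendre F.
Variables (gamma : 'cV[R]_n) (kappa : R).
Hypothesis kappa_gt0 : 0 < kappa.
Implicit Types (q s : 'cV[R]_n).

Lemma Sloss_conj_obj s q : simplex q ->
  Sloss gamma kappa F s q =
  (kappa * (fine (fconj F s) - fine (conj_obj F (s - kappa^-1 *: gamma) q)))%:E.
Proof.
move=> sq; rewrite /Sloss /FYloss conj_objE //.
move: (F_fin_num FL sq) (fconj_fin_num FL s).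
case: (F q) => // a _; case: (fconj F s) => // b _ /=.
rewrite -?EFinD -?EFinB -?EFinM -?EFinD dotvBl dotvZl; congr (_%:E).
by field; rewrite lt0r_neq0.
Qed.

Lemma Sloss_fin_num s q : simplex q -> Sloss gamma kappa F s q \is a fin_num.
Proof. by move=> sq; rewrite Sloss_conj_obj. Qed.

Lemma Sloss_argminP s q :
  is_argmin (@simplex R n) (Sloss gamma kappa F s) q <->
  simplex q /\ forall z, (conj_obj F (s - kappa^-1 *: gamma) z <=
                          conj_obj F (s - kappa^-1 *: gamma) q)%E.
Proof.
set v := s - _; split=> -[sq qmin]; split=> // z; last first.
  move=> sz; have := qmin z.
  by rewrite !Sloss_conj_obj // !conj_objE // !lee_fin /= ler_pM2l // lerD2l lerN2.
have [sz|nsz] := pselect (simplex z); last by rewrite conj_obj_out ?leNye.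
have := qmin z sz.
by rewrite !Sloss_conj_obj // !conj_objE // !lee_fin /= ler_pM2l // lerD2l lerN2.
Qed.

Lemma Sloss_argmin_gradient s : exists g,
  is_gradient (fun v => fine (fconj F v)) (s - kappa^-1 *: gamma) g /\
  (forall q, is_argmin (@simplex R n) (Sloss gamma kappa F s) q <-> q = g).
Proof.
have [p sp pmax] := conj_obj_argmax FL (s - kappa^-1 *: gamma).
exists p; split; first exact: fconj_gradient.
move=> q; rewrite Sloss_argminP; split=> [[sq qmax]|->] //.
exact: argmax_unique FL _ _ _ sq sp qmax pmax.
Qed.

Lemma Sloss_FYloss_OmegaC d (Y : 'M[R]_(d, n)) (phi : 'cV[R]_d) q : simplex q ->
  Sloss gamma kappa F (Y^T *m phi) q =
  ((dotv gamma q + kappa * (fine (F q) - fine (OmegaC Y F (Y *m q))))%:E +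
   kappa%:E * FYloss (OmegaC Y F) phi (Y *m q))%E.
Proof.
move=> sq; rewrite /Sloss /FYloss fconj_OmegaC // -dotv_trmx.
move: (F_fin_num FL sq) (OmegaC_fin_num Y FL sq) (fconj_fin_num FL (Y^T *m phi)).
case: (F q) => // a _; case: (OmegaC Y F _) => // b _; case: (fconj F _) => // c _ /=.
by rewrite -?EFinD -?EFinB -?EFinM -?EFinD; congr (_%:E); ring.
Qed.

End FenchelYoungObjective.

Section SeparableArgmin.
Variable R : realType.
Local Open Scope ereal_scope.

Lemma is_argmin_mean (I : finType) (T : I -> Type) (D : forall i, set (T i))
    (f : forall i, T i -> \bar R) (Q : forall i, T i) :
  (forall i q, D i q -> f i q \is a fin_num) ->
  (forall i, exists p, is_argmin (D i) (f i) p) ->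
  is_argmin [set Q | forall i, D i (Q i)]
    (fun Q => (#|I|%:R^-1)%:E * \sum_i f i (Q i)) Q <->
  forall i, is_argmin (D i) (f i) (Q i).
Proof.
move=> f_fin f_min; split=> [[DQ Qmin] i|Qmin]; last first.
  split=> [i|Q' DQ']; first by case: (Qmin i).
  apply: lee_wpmul2l; first by rewrite lee_fin invr_ge0.
  by apply: lee_sum => i _; apply: (Qmin i).2.
pose P j := proj1_sig (cid (f_min j)).
have Pmin j : is_argmin (D j) (f j) (P j) := proj2_sig (cid (f_min j)).
have sumE Q' : (forall j, D j (Q' j)) ->
    \sum_j f j (Q' j) = (\sum_j fine (f j (Q' j)))%:E.
  by move=> DQ'; rewrite -sumEFin; apply: eq_bigr => j _; rewrite fineK ?f_fin.
have I_gt0 : (0 < #|I|)%N by apply/card_gt0P; exists i.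
have := Qmin P (fun j => (Pmin j).1).
rewrite !sumE // => [|j]; last exact: (Pmin j).1.
rewrite -!EFinM lee_fin ler_pM2l ?invr_gt0 ?ltr0n // => sumQP.
(* each summand at [Q] dominates the one at [P], so equal sums force equality *)
have gap_ge0 j : true -> (0 <= fine (f j (Q j)) - fine (f j (P j)))%R.
  move=> _; rewrite subr_ge0 -lee_fin !fineK ?f_fin //; last exact: (Pmin j).1.
  exact: (Pmin j).2.
have gap_sum0 : (\sum_j (fine (f j (Q j)) - fine (f j (P j))) = 0)%R.
  by apply/eqP; rewrite eq_le sumr_ge0 // andbT sumrB subr_le0.
have /eqP := psumr_eq0P gap_ge0 gap_sum0 (i := i) isT.
rewrite subr_eq0 => /eqP QPi; split=> // y Dy.
rewrite -(fineK (f_fin _ _ (DQ i))) QPi fineK; first exact: (Pmin i).2.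
exact/f_fin/(Pmin i).1.
Qed.

Lemma mean_affine (I : finType) (a : I -> R) (k : R) (g : I -> \bar R) :
  (forall i, g i \is a fin_num) ->
  (#|I|%:R^-1)%:E * \sum_i ((a i)%:E + k%:E * g i) =
  (#|I|%:R^-1 * \sum_i a i)%:E + k%:E * ((#|I|%:R^-1)%:E * \sum_i g i).
Proof.
move=> g_fin; have -> : g = fun i => (fine (g i))%:E.
  by apply/funext => i; rewrite fineK.
under eq_bigr do rewrite -EFinM -EFinD.
rewrite !sumEFin -!EFinM -EFinD; congr (_%:E).
by rewrite big_split /= -mulr_sumr; ring.
Qed.

Lemma is_argmin_affine (W : Type) (D : set W) (a k : R) (g : W -> \bar R) w :
  (0 < k)%R -> (forall w, D w -> g w \is a fin_num) ->
  is_argmin D (fun w => a%:E + k%:E * g w) w <-> is_argmin D g w.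
Proof.
move=> k_gt0 g_fin.
by split=> -[Dw wmin]; split=> // y Dy; have := wmin y Dy;
  rewrite leeD2lE // lee_pmul2l // lte_fin.
Qed.

End SeparableArgmin.

Theorem proposition1 (R : realType) (X Xi W : Type) (N : nat)
  (x : 'I_N -> X) (xi : 'I_N -> Xi)
  (d m : X -> nat) (Y : forall z : X, 'M[R]_(d z, m z))
  (c : forall z : X, 'cV[R]_(d z) -> Xi -> R)
  (Omega : forall z : X, 'cV[R]_(m z) -> \bar R)
  (phi : W -> forall z : X, 'cV[R]_(d z)) (kappa : R) :
  (forall i : 'I_N, no_convex_comb (Y (x i))) ->
  (forall i : 'I_N,
     proper_fun (Omega (x i)) /\ lower_semicontinuous (Omega (x i)) /\
     convex_fun (Omega (x i)) /\ dom_is_simplex (Omega (x i)) /\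
     legendre_on_aff_simplex (Omega (x i))) ->
  0 < kappa ->
  let gamma (i : 'I_N) : 'cV[R]_(m (x i)) :=
    \col_j c (x i) (col j (Y (x i))) (xi i) in
  let S (i : 'I_N) (s q : 'cV[R]_(m (x i))) : \bar R :=
    Sloss (gamma i) kappa (Omega (x i)) s q in
  let SN (s Q : forall i : 'I_N, 'cV[R]_(m (x i))) : \bar R :=
    ((N%:R)^-1%:E * \sum_(i < N) S i (s i) (Q i))%E in
  let theta (w : W) (i : 'I_N) : 'cV[R]_(m (x i)) :=
    (Y (x i))^T *m phi w (x i) in
  let prod_simplex := [set Q : forall i : 'I_N, 'cV[R]_(m (x i)) |
                        forall i, simplex (Q i)] in
  forall wt : W,
    (* the joint q-update splits into N independent problems *)
    (forall Q, is_argmin prod_simplex (SN (theta wt)) Q <->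
       (forall i, is_argmin (@simplex R _) (S i (theta wt i)) (Q i))) /\
    (* each of them has a unique solution, given by grad Omega^* *)
    (forall i : 'I_N,
       (forall v, fconj (Omega (x i)) v \is a fin_num) /\
       exists g : 'cV[R]_(m (x i)),
         is_gradient (fun v => fine (fconj (Omega (x i)) v))
                     (theta wt i - kappa^-1 *: gamma i) g /\
         (forall q, is_argmin (@simplex R _) (S i (theta wt i)) q <-> q = g)) /\
    (forall Q, is_argmin prod_simplex (SN (theta wt)) Q ->
       (* mu_i = Y(x_i) q_i is the expectation of y under the distribution q_i *)
       (forall i : 'I_N, simplex (Q i) /\
          Y (x i) *m Q i = \sum_(j < m (x i)) Q i j 0 *: col j (Y (x i))) /\
       (* the w-update is a Fenchel-Young loss minimization *)
       (forall w' : W,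
          is_argmin [set: W] (fun w => SN (theta w) Q) w' <->
          is_argmin [set: W]
            (fun w => ((N%:R)^-1%:E *
               \sum_(i < N) FYloss (OmegaC (Y (x i)) (Omega (x i)))
                                   (phi w (x i)) (Y (x i) *m Q i))%E) w')).
Proof.
move=> _ OmegaL kappa_gt0 gamma S SN theta prod_simplex wt.
have S_min i := Sloss_argmin_gradient (OmegaL i) (gamma i) kappa_gt0 (theta wt i).
have q_update Q : is_argmin prod_simplex (SN (theta wt)) Q <->
    forall i, is_argmin (@simplex R _) (S i (theta wt i)) (Q i).
  have := @is_argmin_mean R _ _ (fun i => @simplex R (m (x i)))
    (fun i => S i (theta wt i)) Q; rewrite card_ord; apply=> [i q|i].
    by move=> sq; apply: (Sloss_fin_num (OmegaL i) (gamma i) kappa_gt0 _ sq).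
  by have [g [_ /(_ g) gmin]] := S_min i; exists g; apply/gmin.
split=> //; split=> [i|Q /q_update Qmin].
  by split; [exact: fconj_fin_num (OmegaL i)|exact: S_min].
have sQ i : simplex (Q i) by case: (Qmin i).
split=> [i|w']; first by split; [exact: sQ|exact: mulmx_col_sum].
have FY_fin i w : FYloss (OmegaC (Y (x i)) (Omega (x i))) (phi w (x i))
    (Y (x i) *m Q i) \is a fin_num.
  exact: (FYloss_OmegaC_fin_num _ (OmegaL i) _ (sQ i)).
have [a SN_split] : exists a : R, forall w, SN (theta w) Q =
    (a%:E + kappa%:E * ((N%:R^-1)%:E * \sum_(i < N)
       FYloss (OmegaC (Y (x i)) (Omega (x i))) (phi w (x i)) (Y (x i) *m Q i)))%E.
  eexists => w; rewrite /SN /S /theta.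
  rewrite (eq_bigr _ (fun i _ => Sloss_FYloss_OmegaC (OmegaL i) _ _ _ _ (sQ i))).
  by rewrite -[N in N%:R]card_ord mean_affine ?card_ord.
rewrite (funext SN_split); apply: is_argmin_affine kappa_gt0 _ => w _.
by rewrite fin_numM //; apply/sum_fin_numP => i _ _.
Qed.
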